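(* The ai-semiring $\mathcal{B}_2^1$ lies in the variety of ai-semirings generated by $\mathcal{A}_2^1$, i.e., $\mathcal{B}_2^1$ satisfies every identity (in the signature $+,\cdot$) satisfied by $\mathcal{A}_2^1$.
   Context: An ai-semiring is a structure $(R,+,\cdot)$ with $(R,+)$ a semilattice, $(R,\cdot)$ a semigroup, and multiplication distributing over addition on both sides; in a semilattice, $s\le t$ iff $s+t=t$, and $s+t$ is the supremum. $\mathcal{A}_2^1$: Let $A_2=\langle e,a\mid eae=e^2=e,\ aea=a,\ a^2=0\rangle=\{e,a,ae,ea,0\}$, $A_2^1$ the monoid obtained by adjoining an identity $1$. Represent $A_2^1$ by order-preserving maps of the chain $0<1<2$ fixing $2$ (acting on the right, $x(\alpha\beta)=(x\alpha)\beta$): $1\mapsto$ identity; $ea\mapsto(0\mapsto1,1\mapsto1,2\mapsto2)$; $ae\mapsto(0\mapsto0,1\mapsto2,2\mapsto2)$; $a\mapsto(0\mapsto1,1\mapsto2,2\mapsto2)$; $e\mapsto(0\mapsto0,1\mapsto0,2\mapsto2)$; $0\mapsto$ constant map to $2$. Addition in $\mathcal{A}_2^1$ is pointwise maximum; its order is $e<1<ea<a<0$, $1<ae<a$ with $ea,ae$ incomparable. $\mathcal{B}_2^1$: $B_2=\langle c,d\mid cdc=c,\ dcd=d,\ c^2=d^2=0\rangle=\{c,d,cd,dc,0\}$, $B_2^1$ with identity $1$ adjoined; addition is the join in the order where $0$ is the top, $c,d,cd,dc$ lie directly below $0$, and $1$ lies below $cd$ and $dc$ only. *)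

From mathcomp Require Import all_boot.
Set Implicit Arguments. Unset Strict Implicit. Unset Printing Implicit Defensive.

Inductive term : Type :=
| Var of nat
| Add of term & term
| Mul of term & term.

Fixpoint eval {T : Type} (add mul : T -> T -> T) (v : nat -> T) (t : term) : T :=
  match t with
  | Var n => v n
  | Add s u => add (eval add mul v s) (eval add mul v u)
  | Mul s u => mul (eval add mul v s) (eval add mul v u)
  end.

Definition satisfies {T : Type} (add mul : T -> T -> T) (s t : term) : Prop :=
  forall v : nat -> T, eval add mul v s = eval add mul v t.

Inductive A21 : Type := A1 | Ae | Aa | Aae | Aea | A0.

(** Each element is an order-preserving map of the chain 0<1<2 fixing 2;
    actA x i is the image of i. *)
Definition actA (x : A21) (i : nat) : nat :=
  if i >= 2 then 2 else
  match x with
  | A1  => i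
  | Aea => 1
  | Aae => if i == 0 then 0 else 2
  | Aa  => i.+1
  | Ae  => 0
  | A0  => 2
  end.

Definition ofPairA (p : nat * nat) : A21 :=
  match p with
  | (0, 1) => A1 | (1, 1) => Aea | (0, 2) => Aae
  | (1, 2) => Aa | (0, 0) => Ae | _ => A0
  end.

(** Right action: x (alpha beta) = (x alpha) beta. *)
Definition mulA (x y : A21) : A21 :=
  ofPairA (actA y (actA x 0), actA y (actA x 1)).

Definition addA (x y : A21) : A21 :=
  ofPairA (maxn (actA x 0) (actA y 0), maxn (actA x 1) (actA y 1)).

Inductive B21 : Type := B1 | Bc | Bd | Bcd | Bdc | B0.

(** Multiplication of B_2 = <c,d | cdc=c, dcd=d, c^2=d^2=0>, with 1 adjoined. *)
Definition mulB (x y : B21) : B21 :=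
  match x, y with
  | B1, _ => y
  | _, B1 => x
  | B0, _ => B0
  | _, B0 => B0
  | Bc, Bd => Bcd
  | Bc, Bdc => Bc
  | Bd, Bc => Bdc
  | Bd, Bcd => Bd
  | Bcd, Bc => Bc
  | Bcd, Bcd => Bcd
  | Bdc, Bd => Bd
  | Bdc, Bdc => Bdc
  | _, _ => B0
  end.

Definition leB (x y : B21) : bool :=
  match x, y with
  | _, B0 => true
  | B1, (B1 | Bcd | Bdc) => true
  | Bc, Bc | Bd, Bd | Bcd, Bcd | Bdc, Bdc => true
  | _, _ => false
  end.

Definition addB (x y : B21) : B21 :=
  match x, y with
  | B1, B1 => B1
  | B1, Bcd | Bcd, B1 | Bcd, Bcd => Bcd
  | B1, Bdc | Bdc, B1 | Bdc, Bdc => Bdc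
  | Bc, Bc => Bc
  | Bd, Bd => Bd
  | _, _ => B0
  end.

Definition allA := [:: A1; Ae; Aa; Aae; Aea; A0].
Definition allB := [:: B1; Bc; Bd; Bcd; Bdc; B0].

Lemma mulA_act : forall x y i, i <= 2 -> actA (mulA x y) i = actA y (actA x i).
Proof. by do 2 case; case=> [|[|[|]]]. Qed.

Lemma addA_act : forall x y i, i <= 2 -> actA (addA x y) i = maxn (actA x i) (actA y i).
Proof. by do 2 case; case=> [|[|[|]]]. Qed.

Lemma addB_join : forall x y z,
  leB x (addB x y) /\ leB y (addB x y) /\ (leB x z -> leB y z -> leB (addB x y) z).
Proof. by do 3 case. Qed.

Lemma mulB_rel : mulB (mulB Bc Bd) Bc = Bc /\ mulB (mulB Bd Bc) Bd = Bd /\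
  mulB Bc Bc = B0 /\ mulB Bd Bd = B0 /\ mulB Bc Bd = Bcd /\ mulB Bd Bc = Bdc.
Proof. by []. Qed.

Lemma mulB_assoc : forall x y z, mulB x (mulB y z) = mulB (mulB x y) z.
Proof. by do 3 case. Qed.

(** The pairs 1 = (1, 1), c = (e, a) and d = (a, e) of A_2^1 x A_2^1 satisfy
    c d c = c and d c d = d, with c d = (ea, ae) and d c = (ae, ea).  They lie
    in a subsemiring consisting of 1, c, d, c d, d c and an ideal containing
    c^2 = (e, 0) and d^2 = (0, e); collapsing that ideal to a single absorbing
    top (a Rees quotient) gives B_2^1.  So B_2^1 is a homomorphic image of a
    subsemiring of a direct power of A_2^1, and identities survive each of
    these three constructions. *)
From mathcomp Require Import all_boot.

Set Implicit Arguments.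
Unset Strict Implicit.
Unset Printing Implicit Defensive.

Section DirectProduct.

Variables (T1 T2 : Type) (add1 mul1 : T1 -> T1 -> T1) (add2 mul2 : T2 -> T2 -> T2).

Definition add_pair (x y : T1 * T2) : T1 * T2 := (add1 x.1 y.1, add2 x.2 y.2).
Definition mul_pair (x y : T1 * T2) : T1 * T2 := (mul1 x.1 y.1, mul2 x.2 y.2).

Lemma eval_pair (w : nat -> T1 * T2) (t : term) :
  eval add_pair mul_pair w t =
  (eval add1 mul1 (fun n => (w n).1) t, eval add2 mul2 (fun n => (w n).2) t).
Proof.
by elim: t => [n|s IHs u IHu|s IHs u IHu] /=; rewrite ?IHs ?IHu //; case: (w n).
Qed.

Lemma satisfies_pair (s t : term) :
  satisfies add1 mul1 s t -> satisfies add2 mul2 s t ->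
  satisfies add_pair mul_pair s t.
Proof. by move=> st1 st2 w; rewrite !eval_pair st1 st2. Qed.

End DirectProduct.

(** A partial map [h] whose domain contains the image of [lift] and is closed
    under the operations, on which [h] is a morphism, exhibits [T] as a
    homomorphic image of a subalgebra of [S]. *)
Section PartialImage.

Variables (S T : Type) (addS mulS : S -> S -> S) (addT mulT : T -> T -> T).
Variables (h : S -> option T) (lift : T -> S).
Hypothesis h_lift : forall b, h (lift b) = Some b.
Hypothesis h_add : forall x y a b,
  h x = Some a -> h y = Some b -> h (addS x y) = Some (addT a b).
Hypothesis h_mul : forall x y a b,
  h x = Some a -> h y = Some b -> h (mulS x y) = Some (mulT a b).

Lemma eval_partial_morph (v : nat -> T) (t : term) :
  h (eval addS mulS (fun n => lift (v n)) t) = Some (eval addT mulT v t).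
Proof.
elim: t => [n|s IHs u IHu|s IHs u IHu] /=; first exact: h_lift.
- exact: h_add.
- exact: h_mul.
Qed.

Lemma satisfies_partial_image (s t : term) :
  satisfies addS mulS s t -> satisfies addT mulT s t.
Proof.
move=> st v; have := eval_partial_morph v t.
by rewrite -st eval_partial_morph => -[].
Qed.

End PartialImage.

Definition lift_B21 (b : B21) : A21 * A21 :=
  match b with
  | B1 => (A1, A1) | Bc => (Ae, Aa) | Bd => (Aa, Ae)
  | Bcd => (Aea, Aae) | Bdc => (Aae, Aea) | B0 => (A0, A0)
  end.

Definition rees_B21 (p : A21 * A21) : option B21 :=
  match p with
  | (A1, A1) => Some B1
  | (Ae, Aa) => Some Bc
  | (Aa, Ae) => Some Bd
  | (Aea, Aae) => Some Bcd
  | (Aae, Aea) => Some Bdc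
  | (A1, Aa) | (Aa, A1) | (Aa, Aa) | (Aa, Aea) | (Aa, Aae) | (Aea, Aa)
  | (Aae, Aa) | (Ae, A0) | (A0, Ae) | (A1, A0) | (A0, A1) | (Aa, A0)
  | (A0, Aa) | (Aea, A0) | (A0, Aea) | (Aae, A0) | (A0, Aae) | (A0, A0) =>
      Some B0
  | _ => None
  end.

Lemma rees_B21_lift (b : B21) : rees_B21 (lift_B21 b) = Some b.
Proof. by case: b. Qed.

Lemma rees_B21_add (x y : A21 * A21) (a b : B21) :
  rees_B21 x = Some a -> rees_B21 y = Some b ->
  rees_B21 (add_pair addA addA x y) = Some (addB a b).
Proof. by case: x => [[] []]; case: y => [[] []] //= [<-] [<-]. Qed.

Lemma rees_B21_mul (x y : A21 * A21) (a b : B21) :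
  rees_B21 x = Some a -> rees_B21 y = Some b ->
  rees_B21 (mul_pair mulA mulA x y) = Some (mulB a b).
Proof. by case: x => [[] []]; case: y => [[] []] //= [<-] [<-]. Qed.

Theorem corollary3p3 :
  forall s t : term, satisfies addA mulA s t -> satisfies addB mulB s t.
Proof.
move=> s t stA.
apply: (satisfies_partial_image rees_B21_lift rees_B21_add rees_B21_mul).
exact: satisfies_pair.
Qed.
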